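(* For every $\phi\in L^1(\mathbb{R}_+)$ with $\int_0^\infty\phi(x)\,dx = 1$, the summability method $S_\phi$ is stronger than $K$; that is, $K$ is the weakest among these summability methods.
   Context: $\mathbb{R}_+=[0,\infty)$; functions are complex-valued. For $f\in L^\infty(\mathbb{R}_+)$: $K(f)=\alpha$ means that $f(\cdot+s)$ converges as $s\to\infty$ to the constant $\alpha$ in the weak* topology of $L^\infty(\mathbb{R}_+)$; $\mathcal{D}(K)$ is the set of $f$ for which such a constant limit exists. $S_\phi(f) = \lim_{x\to\infty}\int_0^x f(t)\phi(x-t)\,dt$, with domain the $f$ for which the limit exists. $S$ is stronger than $S'$ if $\mathcal{D}(S')\subseteq\mathcal{D}(S)$ and $S=S'$ on $\mathcal{D}(S')$. *)

From HB Require Import structures.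
From mathcomp Require Import all_boot all_order all_algebra.
From mathcomp Require Import all_classical all_reals all_analysis.
From mathcomp Require Import complex.
Set Implicit Arguments. Unset Strict Implicit. Unset Printing Implicit Defensive.
Import Order.TTheory GRing.Theory Num.Theory numFieldNormedType.Exports.
Local Open Scope classical_set_scope.
Local Open Scope ring_scope.

Section Defs.
Variable R : realType.
Local Notation mu := (@lebesgue_measure R).

Definition Rnonneg : set R := `[0, +oo[%classic.

Definition cintegrable (D : set R) (f : R -> R[i]) : Prop :=
  mu.-integrable D (EFin \o (fun x => complex.Re (f x))) /\
  mu.-integrable D (EFin \o (fun x => complex.Im (f x))).

Definition cint (D : set R) (f : R -> R[i]) : R[i] :=
  Complex (\int[mu]_(x in D) complex.Re (f x)) (\int[mu]_(x in D) complex.Im (f x)).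

Definition Linfty_Rnonneg (f : R -> R[i]) : Prop :=
  measurable_fun Rnonneg (fun x => complex.Re (f x)) /\
  measurable_fun Rnonneg (fun x => complex.Im (f x)) /\
  exists M : R, {ae mu, forall x, Rnonneg x -> Num.sqrt (complex.Re (f x) ^+ 2 + complex.Im (f x) ^+ 2) <= M}.

Definition L1_Rnonneg (f : R -> R[i]) : Prop := cintegrable Rnonneg f.

Definition ccvg_pinfty (F : R -> R[i]) (a : R[i]) : Prop :=
  (complex.Re (F x) @[x --> +oo%R] --> (complex.Re a : R)) /\
  (complex.Im (F x) @[x --> +oo%R] --> (complex.Im a : R)).

(** K(f) = alpha : f(. + s) -> alpha weak* in L^oo(R_+) = (L^1(R_+))^*. *)
Definition K_sum (f : R -> R[i]) (alpha : R[i]) : Prop :=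
  forall g : R -> R[i], L1_Rnonneg g ->
    ccvg_pinfty (fun s => cint Rnonneg (fun t => f (t + s) * g t))
                (cint Rnonneg (fun t => alpha * g t)).

Definition S_sum (phi f : R -> R[i]) (alpha : R[i]) : Prop :=
  ccvg_pinfty (fun x => cint `[0, x]%classic (fun t => f t * phi (x - t))) alpha.

End Defs.
Arguments Rnonneg {R}.

From HB Require Import structures.
From mathcomp Require Import all_boot all_order all_algebra.
From mathcomp Require Import all_classical all_reals all_analysis.
From mathcomp Require Import complex.
From mathcomp Require Import measurable_realfun ring lra.
Import Order.TTheory GRing.Theory Num.Theory numFieldNormedType.Exports.
Local Open Scope classical_set_scope.
Local Open Scope ring_scope.

(* Split [0, x] at x - T.  On [x - T, x] the convolution is the pairing of
   f(. + (x - T)) with the integrable function t |-> phi (T - t) 1_[0,T](t), so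
   by K(f) = alpha it tends to alpha \int_0^T phi.  On [0, x - T[ it is bounded
   by ||f||_oo \int_T^oo |phi|, which, like alpha \int_T^oo phi, is small for T
   large.  As K(f) = alpha may be tested against real functions, the real and
   imaginary parts of f and phi can be treated separately. *)

Section reflection.
Context {R : realType}.
Local Notation mu := (@lebesgue_measure R).
Implicit Types (c : R) (D : set R).

Lemma measurable_fun_reflect c : measurable_fun [set: R] (fun x => c - x).
Proof. exact: measurable_funB. Qed.

Lemma measurable_reflect c D : measurable D ->
  measurable ((fun x => c - x) @^-1` D).
Proof. by move=> mD; rewrite -[X in measurable X]setTI; exact: measurable_fun_reflect. Qed.

Lemma measurable_fun_comp_reflect {d} {T : measurableType d} c D (f : R -> T) :
  measurable D -> measurable_fun D f ->
  measurable_fun ((fun x => c - x) @^-1` D) (fun x => f (c - x)).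
Proof.
move=> mD mf; apply: (measurable_comp mD _ mf); first by move=> _ [x Dx <-].
exact: measurable_funS (measurable_fun_reflect c).
Qed.

Lemma lebesgue_measure_reflect c A : measurable A ->
  mu ((fun x => c - x) @^-1` A) = mu A.
Proof.
move=> mA.
change (pushforward mu ((fun x => c - x) : R -> measurableTypeR R) A = mu A).
apply/esym/lebesgue_measure_unique => //=; first exact: measurable_fun_reflect.
move=> _ X [[a b] _ <-]; rewrite /pushforward.
have -> : (fun x => c - x) @^-1` `]a, b]%classic = `[c - b, c - a[%classic.
  by apply/seteqP; split => x /=; rewrite !in_itv /= => /andP[? ?]; apply/andP; split; lra.
rewrite !lebesgue_measure_itv /= !lte_fin ltrD2l ltrN2 -!EFinD.
by case: ifP => // _; congr (_%:E); lra.
Qed.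

Local Open Scope ereal_scope.

Lemma ge0_integral_reflect c D (f : R -> \bar R) : measurable D ->
  measurable_fun D f -> (forall x, D x -> 0 <= f x) ->
  \int[mu]_(x in D) f x = \int[mu]_(x in (fun x => c - x)%R @^-1` D) f (c - x)%R.
Proof.
move=> mD mf f0.
have := @ge0_integral_pushforward _ _ (measurableTypeR R) (measurableTypeR R) R
  ((fun x => c - x)%R : R -> measurableTypeR R) (measurable_fun_reflect c) mu D f mD mf.
have f0' : {in D, forall x, 0 <= f x} by move=> x /set_mem; exact: f0.
move=> /(_ f0') <-.
apply: eq_measure_integral; first exact: measurable_fun_reflect.
by move=> mr A mA _; rewrite /= -(lebesgue_measure_reflect c _ mA).
Qed.

Lemma integral_reflect c D (f : R -> \bar R) : measurable D -> measurable_fun D f ->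
  \int[mu]_(x in D) f x = \int[mu]_(x in (fun x => c - x)%R @^-1` D) f (c - x)%R.
Proof.
move=> mD mf; rewrite integralE [RHS]integralE.
rewrite (ge0_integral_reflect c _ _ mD (measurable_funepos mf));
  last by move=> *; exact: funepos_ge0.
rewrite (ge0_integral_reflect c _ _ mD (measurable_funeneg mf));
  last by move=> *; exact: funeneg_ge0.
by congr (_ - _); apply: eq_integral => x _; rewrite !unlock.
Qed.

Local Close Scope ereal_scope.

Lemma Rintegral_reflect c D (f : R -> R) : measurable D -> measurable_fun D f ->
  \int[mu]_(x in D) f x = \int[mu]_(x in (fun x => c - x) @^-1` D) f (c - x).
Proof.
by move=> mD mf; rewrite /Rintegral (integral_reflect c _ _ mD) //; exact/measurable_EFinP.
Qed.

Lemma integrable_reflect c D (f : R -> R) : measurable D ->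
  mu.-integrable D (EFin \o f) ->
  mu.-integrable ((fun x => c - x) @^-1` D) (EFin \o (fun x => f (c - x))).
Proof.
move=> mD /integrableP[mf fi]; apply/integrableP; split.
  exact: (measurable_fun_comp_reflect c _ _ mD mf).
rewrite -(ge0_integral_reflect c _ (fun x => `|(f x)%:E|%E) mD) //.
exact: measurableT_comp.
Qed.

End reflection.

Section Rintegral_comparison.
Context {d} {T : measurableType d} {R : realType}.
Variable mu : {measure set T -> \bar R}.
Implicit Types (D : set T) (f g : T -> R).

Lemma ae_le_integrable D f g : measurable D -> measurable_fun D f ->
  mu.-integrable D (EFin \o g) -> {ae mu, forall x, D x -> `|f x| <= `|g x|} ->
  mu.-integrable D (EFin \o f).
Proof.
move=> mD mf /integrableP[mg gfin] fg; apply/integrableP; split.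
  exact/measurable_EFinP.
apply: le_lt_trans gfin; apply: ae_ge0_le_integral => //.
- by apply: measurableT_comp => //; exact/measurable_EFinP.
- exact: measurableT_comp.
Qed.

Lemma ae_ge0_le_Rintegral D f g : measurable D -> measurable_fun D f ->
  (forall x, D x -> 0 <= f x) -> (forall x, D x -> 0 <= g x) ->
  mu.-integrable D (EFin \o g) -> {ae mu, forall x, D x -> f x <= g x} ->
  \int[mu]_(x in D) f x <= \int[mu]_(x in D) g x.
Proof.
move=> mD mf f0 g0 ig fg.
have if_ : mu.-integrable D (EFin \o f).
  apply: (ae_le_integrable _ _ _ mD mf ig); apply: filterS fg => x fgx Dx.
  by rewrite !ger0_norm ?f0 ?g0 ?fgx.
rewrite /Rintegral fine_le //; try exact: integrable_fin_num.
apply: ae_ge0_le_integral => //.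
- exact: measurable_int if_.
- exact: measurable_int ig.
Qed.

Lemma ge0_subset_Rintegral A B f : measurable A -> measurable B -> A `<=` B ->
  (forall x, B x -> 0 <= f x) -> mu.-integrable B (EFin \o f) ->
  \int[mu]_(x in A) f x <= \int[mu]_(x in B) f x.
Proof.
move=> mA mB AB f0 ifB.
have ifA := integrableS mB mA AB ifB.
rewrite /Rintegral fine_le //; try exact: integrable_fin_num.
by apply: ge0_subset_integral => //; exact: (measurable_int mu).
Qed.

End Rintegral_comparison.

Section Rnonneg_sets.
Context {R : realType}.

(* [measurable_itv] stated on [measurableTypeR R], the carrier of
   [lebesgue_measure]; it does not unify there otherwise. *)
Lemma measurable_itvR (i : interval R) : measurable ([set` i] : set (measurableTypeR R)).
Proof. exact: measurable_itv. Qed.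

Lemma measurable_Rnonneg : measurable (Rnonneg : set (measurableTypeR R)).
Proof. exact: measurable_itvR. Qed.

Lemma Rnonneg_itv_cc (T : R) : `[0, T] `<=` Rnonneg.
Proof. by move=> u /=; rewrite /Rnonneg /= !in_itv /= andbT => /andP[]. Qed.

End Rnonneg_sets.

Section integrable_tail.
Context {R : realType}.
Local Notation mu := (@lebesgue_measure R).

Lemma integrable_tail_lt (psi : R -> R) : mu.-integrable Rnonneg (EFin \o psi) ->
  forall e, 0 < e -> exists T, 0 <= T /\ \int[mu]_(t in `]T, +oo[) `|psi t| < e.
Proof.
move=> ipsi e e0.
have /measurable_EFinP mpsi := measurable_int mu ipsi.
pose F := (fun t => `|psi t|) \_ Rnonneg.
have F0 t : 0 <= F t by rewrite /F patchE; case: ifP.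
have mF : measurable_fun setT F.
  by apply/(measurable_restrictT _ measurable_Rnonneg); exact: measurableT_comp.
have FE D : D `<=` Rnonneg ->
    (\int[mu]_(x in D) (F x)%:E = \int[mu]_(x in D) `|psi x|%:E)%E.
  move=> DR; apply: eq_integral => t /set_mem Dt.
  by rewrite /F patchE mem_set //; exact: DR.
have ipsi_fin : (\int[mu]_(x in Rnonneg) `|psi x|%:E)%E \is a fin_num.
  exact: (integrable_fin_num measurable_Rnonneg (integrable_norm ipsi)).
have := @ge0_cvgn_integral R mu F F0 mF; rewrite FE //.
have FEn (n : nat) : (\int[mu]_(x in `[0%R, (n%:R : R)]) (F x)%:E =
    \int[mu]_(x in `[0%R, (n%:R : R)]) `|psi x|%:E)%E by apply: FE; exact: Rnonneg_itv_cc.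
under eq_fun do rewrite FEn.
rewrite -(fineK ipsi_fin) => /fine_cvgP[_] /cvgrPdist_lt /(_ e e0) [N _ HN].
exists N%:R; split => //.
rewrite -(@Rintegral_itvB _ (fun t => `|psi t|) (BLeft 0) (BInfty _ false) N%:R) //.
- exact: le_lt_trans (ler_norm _) (HN N (leqnn N)).
- exact: integrable_norm ipsi.
- by rewrite bnd_simp.
Qed.

End integrable_tail.

Local Ltac itv_lra := rewrite ?/Rnonneg;
  first [apply/seteqP; split => u /= | move=> u /=]; rewrite ?in_itv /= ?andbT;
  try move=> /andP[? ?]; try move=> ?; try (apply/andP; split); lra.

Section convolution_limit.
Context {R : realType}.
Local Notation mu := (@lebesgue_measure R).
Variables (h psi : R -> R) (M : R).
Hypothesis mh : measurable_fun Rnonneg h.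
Hypothesis hM : {ae mu, forall x, Rnonneg x -> `|h x| <= M}.
Hypothesis ipsi : mu.-integrable Rnonneg (EFin \o psi).

Lemma integrable_reflected x :
  mu.-integrable `[0, x] (EFin \o (fun t => psi (x - t))).
Proof.
apply: integrableS (integrable_reflect x _ _ measurable_Rnonneg ipsi) => //.
- exact: measurable_reflect measurable_Rnonneg.
- by itv_lra.
Qed.

Lemma convolution_ae_bound x : {ae mu, forall t, `[0, x]%classic t ->
  `|h t * psi (x - t)| <= `|M| * `|psi (x - t)|}.
Proof.
apply: filterS hM; first exact: (ae_filter_ringOfSetsType mu).
move=> t hMt /Rnonneg_itv_cc /hMt ht.
by rewrite normrM ler_wpM2r // (le_trans ht) // ler_norm.
Qed.

Lemma integrable_convolution x :
  mu.-integrable `[0, x] (EFin \o (fun t => h t * psi (x - t))).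
Proof.
have ipsix := integrable_reflected x.
apply: (ae_le_integrable mu _ _ (fun t => M * psi (x - t)) (measurable_itvR _)).
- apply: measurable_funM.
    exact: measurable_funS measurable_Rnonneg (Rnonneg_itv_cc x) mh.
  by apply/measurable_EFinP; exact: measurable_int ipsix.
- exact: (integrableZl (measurable_itvR _) M ipsix).
- apply: filterS (convolution_ae_bound x); first exact: (ae_filter_ringOfSetsType mu).
  by move=> t bound /bound; rewrite [`|M * _|]normrM.
Qed.

Lemma Rintegral_head_le_tail x T : 0 <= T -> T <= x ->
  \int[mu]_(t in `[0, x - T[) `|psi (x - t)| <= \int[mu]_(t in `]T, +oo[) `|psi t|.
Proof.
move=> T0 Tx.
have tail_sub : `]T, +oo[ `<=` Rnonneg by itv_lra.
have ipsiT := integrableS measurable_Rnonneg (measurable_itvR _) tail_sub ipsi.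
have /measurable_EFinP mpsiT := measurable_int mu ipsiT.
have mpsi : measurable_fun `]T, x] psi.
  by apply: measurable_funS (measurable_itvR _) _ mpsiT; itv_lra.
have -> : `[0, x - T[%classic = (fun u => x - u) @^-1` `]T, x]%classic by itv_lra.
rewrite -(Rintegral_reflect x _ (fun u => `|psi u|) (measurable_itvR _));
  last exact: measurableT_comp.
apply: ge0_subset_Rintegral => //.
- by itv_lra.
- exact: integrable_norm.
Qed.

Lemma convolution_head_bound x T : 0 <= T -> T <= x ->
  `|\int[mu]_(t in `[0, x - T[) (h t * psi (x - t))|
    <= `|M| * \int[mu]_(t in `]T, +oo[) `|psi t|.
Proof.
move=> T0 Tx.
have head_sub : `[0, x - T[ `<=` `[0, x] by itv_lra.
have mhead := measurable_itvR `[0, x - T[.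
have iconv := integrableS (measurable_itvR _) mhead head_sub (integrable_convolution x).
have ipsix := integrableS (measurable_itvR _) mhead head_sub (integrable_reflected x).
apply: le_trans (le_normr_Rintegral mhead iconv) _.
apply: le_trans (_ : _ <= \int[mu]_(t in `[0, x - T[) (`|M| * `|psi (x - t)|)) _.
  apply: ae_ge0_le_Rintegral => //.
  - apply: measurableT_comp => //; apply/measurable_EFinP; exact: (measurable_int mu iconv).
  - exact: (integrableZl mhead `|M| (integrable_norm ipsix)).
  - apply: filterS (convolution_ae_bound x); first exact: (ae_filter_ringOfSetsType mu).
    by move=> t bound /head_sub /bound.
rewrite RintegralZl //; last exact: integrable_norm.
by rewrite ler_wpM2l // Rintegral_head_le_tail.
Qed.

Definition window T := (fun t => psi (T - t)) \_ `[0, T].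

Lemma integrable_window T : mu.-integrable Rnonneg (EFin \o window T).
Proof.
have := (integrable_mkcond _ (measurable_itvR `[0, T])).1 (integrable_reflected T).
rewrite restrict_EFin; exact: integrableS measurableT measurable_Rnonneg (@subsetT _ _).
Qed.

Lemma Rintegral_window T :
  \int[mu]_(t in Rnonneg) window T t = \int[mu]_(t in `[0, T]) psi t.
Proof.
rewrite /window -Rintegral_mkcondr (setIidr (Rnonneg_itv_cc T)).
have mpsiT : measurable_fun `[0, T] psi.
  have /measurable_EFinP := measurable_int mu ipsi.
  exact: measurable_funS measurable_Rnonneg (Rnonneg_itv_cc T).
rewrite [RHS](Rintegral_reflect T _ _ (measurable_itvR _) mpsiT).
by have -> : (fun u => T - u) @^-1` `[0, T]%classic = `[0, T]%classic by itv_lra.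
Qed.

Lemma convolution_window x T : T <= x ->
  \int[mu]_(t in Rnonneg) (h (t + (x - T)) * window T t) =
  \int[mu]_(t in `[x - T, x]) (h t * psi (x - t)).
Proof.
move=> Tx.
have window_sub : `[x - T, x] `<=` `[0, x] by itv_lra.
have /measurable_EFinP mhpsi := measurable_int mu
  (integrableS (measurable_itvR _) (measurable_itvR _) window_sub
    (integrable_convolution x)).
have refl_x : (fun u => x - u) @^-1` `[x - T, x]%classic = `[0, T]%classic by itv_lra.
have refl_T : (fun u => T - u) @^-1` `[0, T]%classic = `[0, T]%classic by itv_lra.
have mg := measurable_fun_comp_reflect x _ _ (measurable_itvR _) mhpsi.
rewrite refl_x in mg.
rewrite [RHS](Rintegral_reflect x _ _ (measurable_itvR _) mhpsi) refl_x.
rewrite [RHS](Rintegral_reflect T _ _ (measurable_itvR _) mg) refl_T.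
transitivity (\int[mu]_(t in Rnonneg)
    (((fun t => h (t + (x - T)) * psi (T - t)) \_ `[0, T]) t)).
  by apply: eq_Rintegral => t _; rewrite /window !patchE; case: ifP; rewrite ?mulr0.
rewrite -Rintegral_mkcondr (setIidr (Rnonneg_itv_cc T)).
by apply: eq_Rintegral => t _; congr (h _ * psi _); ring.
Qed.

Lemma convolution_split_bound c x T : 0 <= T -> T <= x ->
  `|c * \int[mu]_(t in Rnonneg) psi t - \int[mu]_(t in `[0, x]) (h t * psi (x - t))|
    <= `|c * \int[mu]_(t in `[0, T]) psi t
         - \int[mu]_(t in `[x - T, x]) (h t * psi (x - t))|
       + (`|c| + `|M|) * \int[mu]_(t in `]T, +oo[) `|psi t|.
Proof.
move=> T0 Tx.
pose head := \int[mu]_(t in `[0, x - T[) (h t * psi (x - t)).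
set tail := \int[mu]_(t in `]T, +oo[) `|psi t|.
have split_conv : \int[mu]_(t in `[0, x]) (h t * psi (x - t))
    = head + \int[mu]_(t in `[x - T, x]) (h t * psi (x - t)).
  have itv_split : `[0, x]%classic = `[0, x - T[ `|` `[x - T, x].
    apply/seteqP; split => u /=; rewrite !in_itv /=.
      by move=> /andP[u0 ux]; case: (ltP u (x - T)) => uxT; [left|right]; lra.
    by case=> /andP[? ?]; lra.
  have disj : [disjoint `[0, x - T[ & `[x - T, x]].
    by apply/disj_setPS => u /=; rewrite !in_itv /= => -[/andP[? ?] /andP[? ?]]; lra.
  rewrite itv_split Rintegral_setU //; try exact: measurable_itvR.
  by rewrite -itv_split; exact: integrable_convolution.
have split_psi : \int[mu]_(t in Rnonneg) psi t
    = \int[mu]_(t in `[0, T]) psi t + \int[mu]_(t in `]T, +oo[) psi t.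
  rewrite -(@Rintegral_itvB _ psi (BLeft 0) (BInfty _ false) T ipsi) ?bnd_simp //.
  by rewrite addrC subrK.
have tail_psi : `|\int[mu]_(t in `]T, +oo[) psi t| <= tail.
  apply: le_normr_Rintegral; first exact: measurable_itvR.
  by apply: integrableS ipsi => //; [exact: measurable_itvR | itv_lra].
have head_le : `|head| <= `|M| * tail := convolution_head_bound x T T0 Tx.
rewrite split_conv split_psi.
set P1 := \int[mu]_(t in `[0, T]) psi t.
set P2 := \int[mu]_(t in `]T, +oo[) psi t.
set B := \int[mu]_(t in `[x - T, x]) _.
have -> : c * (P1 + P2) - (head + B) = (c * P1 - B) + c * P2 - head by ring.
have cP2 : `|c * P2| <= `|c| * tail by rewrite normrM ler_wpM2l.
have := ler_normB (c * P1 - B + c * P2) head.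
have := ler_normD (c * P1 - B) (c * P2).
rewrite mulrDl; lra.
Qed.

Theorem convolution_cvg c :
  (forall g, mu.-integrable Rnonneg (EFin \o g) ->
    \int[mu]_(t in Rnonneg) (h (t + s) * g t) @[s --> +oo]
      --> c * \int[mu]_(t in Rnonneg) g t) ->
  \int[mu]_(t in `[0, x]) (h t * psi (x - t)) @[x --> +oo]
    --> c * \int[mu]_(t in Rnonneg) psi t.
Proof.
move=> hK; apply/cvgrPdist_lt => e e0.
have c0 := normr_ge0 c; have M0 := normr_ge0 M.
pose K := `|c| + `|M| + 1.
have K0 : 0 < K by rewrite /K; lra.
have e2 : 0 < e / 2 by rewrite divr_gt0.
have [T [T0 tailT]] := integrable_tail_lt _ ipsi _ (divr_gt0 e0 (mulr_gt0 (ltr0n _ 2) K0)).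
set tail := \int[mu]_(t in `]T, +oo[) _ in tailT.
have Ktail : K * tail < e / 2.
  have -> : e / 2 = K * (e / (2 * K)) by field; lra.
  by rewrite ltr_pM2l.
have tail0 : 0 <= tail by apply: Rintegral_ge0.
have := hK _ (integrable_window T); rewrite Rintegral_window.
move=> /cvgrPdist_lt /(_ _ e2) [S [_ HS]].
exists (`|S| + T); split; first exact: num_real.
move=> x Sx; have := ler_norm S => SS.
have Tx : T <= x by have := normr_ge0 S; lra.
have := HS (x - T) ltac:(lra); rewrite convolution_window // => window_close.
apply: le_lt_trans (convolution_split_bound c x T T0 Tx) _.
have : (`|c| + `|M|) * tail <= K * tail by rewrite ler_wpM2r // /K lerDl.
rewrite -/tail; lra.
Qed.

End convolution_limit.

Arguments integrable_convolution {R h psi M}.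
Arguments convolution_cvg {R h psi M} mh hM ipsi {c}.

Section complex_parts.
Context {R : realType}.
Local Notation mu := (@lebesgue_measure R).

Lemma ReM (z w : R[i]) :
  complex.Re (z * w) = complex.Re z * complex.Re w - complex.Im z * complex.Im w.
Proof. by case: z => ? ?; case: w. Qed.

Lemma ImM (z w : R[i]) :
  complex.Im (z * w) = complex.Re z * complex.Im w + complex.Im z * complex.Re w.
Proof. by case: z => ? ?; case: w. Qed.

Lemma ler_norm_sqrt_sqrD (a b : R) : `|a| <= Num.sqrt (a ^+ 2 + b ^+ 2).
Proof. by rewrite -sqrtr_sqr ler_wsqrtr // lerDl sqr_ge0. Qed.

Lemma ae_bounded_parts {f : R -> R[i]} {M : R} :
  {ae mu, forall x, Rnonneg x ->
    Num.sqrt (complex.Re (f x) ^+ 2 + complex.Im (f x) ^+ 2) <= M} ->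
  {ae mu, forall x, Rnonneg x -> `|complex.Re (f x)| <= M} /\
  {ae mu, forall x, Rnonneg x -> `|complex.Im (f x)| <= M}.
Proof.
move=> fM; split; apply: filterS fM; try exact: (ae_filter_ringOfSetsType mu).
- by move=> x fMx /fMx; apply: le_trans; exact: ler_norm_sqrt_sqrD.
- by move=> x fMx /fMx; apply: le_trans; rewrite addrC; exact: ler_norm_sqrt_sqrD.
Qed.

Lemma K_sum_real_tests {f : R -> R[i]} {alpha : R[i]} : K_sum f alpha ->
  forall g : R -> R, mu.-integrable Rnonneg (EFin \o g) ->
  \int[mu]_(t in Rnonneg) (complex.Re (f (t + s)) * g t) @[s --> +oo]
    --> complex.Re alpha * \int[mu]_(t in Rnonneg) g t /\
  \int[mu]_(t in Rnonneg) (complex.Im (f (t + s)) * g t) @[s --> +oo]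
    --> complex.Im alpha * \int[mu]_(t in Rnonneg) g t.
Proof.
move=> Kf g ig.
have gC : L1_Rnonneg (fun t => (g t)%:C%C) by split => //; exact: integrable0.
have ReE : (fun s => \int[mu]_(t in Rnonneg) complex.Re (f (t + s) * (g t)%:C%C))
    = (fun s => \int[mu]_(t in Rnonneg) (complex.Re (f (t + s)) * g t)).
  by apply/funext => s; apply: eq_Rintegral => t _; rewrite ReM /= mulr0 subr0.
have ImE : (fun s => \int[mu]_(t in Rnonneg) complex.Im (f (t + s) * (g t)%:C%C))
    = (fun s => \int[mu]_(t in Rnonneg) (complex.Im (f (t + s)) * g t)).
  by apply/funext => s; apply: eq_Rintegral => t _; rewrite ImM /= mulr0 add0r.
have aRe : \int[mu]_(t in Rnonneg) complex.Re (alpha * (g t)%:C%C)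
    = complex.Re alpha * \int[mu]_(t in Rnonneg) g t.
  rewrite -RintegralZl //; last exact: measurable_Rnonneg.
  by apply: eq_Rintegral => t _; rewrite ReM /= mulr0 subr0.
have aIm : \int[mu]_(t in Rnonneg) complex.Im (alpha * (g t)%:C%C)
    = complex.Im alpha * \int[mu]_(t in Rnonneg) g t.
  rewrite -RintegralZl //; last exact: measurable_Rnonneg.
  by apply: eq_Rintegral => t _; rewrite ImM /= mulr0 add0r.
by have [] := Kf _ gC; rewrite /cint /= ReE ImE aRe aIm.
Qed.

Section complex_convolution.
Variables (f phi : R -> R[i]) (M : R).
Hypothesis mRe : measurable_fun Rnonneg (fun x => complex.Re (f x)).
Hypothesis mIm : measurable_fun Rnonneg (fun x => complex.Im (f x)).
Hypothesis ReM_bound : {ae mu, forall x, Rnonneg x -> `|complex.Re (f x)| <= M}.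
Hypothesis ImM_bound : {ae mu, forall x, Rnonneg x -> `|complex.Im (f x)| <= M}.
Hypothesis iRe : mu.-integrable Rnonneg (EFin \o (fun x => complex.Re (phi x))).
Hypothesis iIm : mu.-integrable Rnonneg (EFin \o (fun x => complex.Im (phi x))).

Lemma Re_convolution x :
  \int[mu]_(t in `[0, x]) complex.Re (f t * phi (x - t)) =
  \int[mu]_(t in `[0, x]) (complex.Re (f t) * complex.Re (phi (x - t))) -
  \int[mu]_(t in `[0, x]) (complex.Im (f t) * complex.Im (phi (x - t))).
Proof.
rewrite -RintegralB; first by apply: eq_Rintegral => t _; rewrite ReM.
- exact: measurable_itvR.
- exact: integrable_convolution mRe ReM_bound iRe x.
- exact: integrable_convolution mIm ImM_bound iIm x.
Qed.

Lemma Im_convolution x :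
  \int[mu]_(t in `[0, x]) complex.Im (f t * phi (x - t)) =
  \int[mu]_(t in `[0, x]) (complex.Re (f t) * complex.Im (phi (x - t))) +
  \int[mu]_(t in `[0, x]) (complex.Im (f t) * complex.Re (phi (x - t))).
Proof.
rewrite -RintegralD; first by apply: eq_Rintegral => t _; rewrite ImM.
- exact: measurable_itvR.
- exact: integrable_convolution mRe ReM_bound iIm x.
- exact: integrable_convolution mIm ImM_bound iRe x.
Qed.

End complex_convolution.
End complex_parts.

Arguments Re_convolution {R f phi M}.
Arguments Im_convolution {R f phi M}.

Theorem corollary3p2 (R : realType) (phi : R -> R[i]) :
  L1_Rnonneg phi -> cint Rnonneg phi = 1 ->
  (* S_phi is stronger than K: D(K) is contained in D(S_phi) and S_phi = K on D(K) *)
  forall (f : R -> R[i]), Linfty_Rnonneg f ->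
  forall alpha : R[i], K_sum f alpha -> S_sum phi f alpha.
Proof.
move=> [iRe iIm] phi1 f [mRe [mIm [M fM]]] alpha Kf.
have [Rephi Imphi] : \int[lebesgue_measure]_(x in Rnonneg) complex.Re (phi x) = 1 /\
    \int[lebesgue_measure]_(x in Rnonneg) complex.Im (phi x) = 0 by case: phi1.
have [ReM_bound ImM_bound] := ae_bounded_parts fM.
have KRe g ig := (K_sum_real_tests Kf g ig).1.
have KIm g ig := (K_sum_real_tests Kf g ig).2.
split; rewrite /cint /=.
- under eq_fun do rewrite (Re_convolution mRe mIm ReM_bound ImM_bound iRe iIm).
  have := cvgB (convolution_cvg mRe ReM_bound iRe KRe)
                (convolution_cvg mIm ImM_bound iIm KIm).
  by move=> /(_ proper_pinfty_nbhs); rewrite Rephi Imphi mulr1 mulr0 subr0.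
- under eq_fun do rewrite (Im_convolution mRe mIm ReM_bound ImM_bound iRe iIm).
  have := cvgD (convolution_cvg mRe ReM_bound iIm KRe)
                (convolution_cvg mIm ImM_bound iRe KIm).
  by move=> /(_ proper_pinfty_nbhs); rewrite Rephi Imphi mulr1 mulr0 add0r.
Qed.
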